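(* For every integer $n\ge 0$ and every integer $j$ with $0\le j\le n/3$, the number $f(n,j)$ of partitions of $n$ whose parts of even index sum to $j$ equals $$\sum_{i=0}^{j} p(i)\,p(j-i),$$ where $p$ is the partition function. (This is the $(j+1)$-st term of Sloane's sequence A000712, the number of ordered pairs $(\alpha,\beta)$ of integer partitions with $|\alpha|+|\beta|=j$.) Moreover, the bound $n/3$ is best possible: for every integer $j$ with $n/3<j\le n/2$, $f(n,j)<\sum_{i=0}^{j}p(i)p(j-i)$.
   Context: A partition $\lambda$ of $n$ is written $n=a_1+a_2+\dots+a_k$ with $a_1\ge a_2\ge\dots\ge a_k\ge1$. The parts of even index are $a_2,a_4,a_6,\dots$ and the parts of odd index are $a_1,a_3,\dots$. $f(n,j)$ denotes the number of partitions of $n$ with $a_2+a_4+a_6+\dots=j$. $p(i)$ is the number of partitions of $i$, with $p(0)=1$. *)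

From mathcomp Require Import all_boot.
Set Implicit Arguments. Unset Strict Implicit. Unset Printing Implicit Defensive.

Definition is_partition (n : nat) (s : seq nat) : bool :=
  [&& sorted geq s, all (fun a => 0 < a) s & sumn s == n].

Fixpoint seqs_len (m k : nat) : seq (seq nat) :=
  if k is k'.+1 then
    [seq a :: t | a <- iota 1 m, t <- seqs_len m k']
  else [:: [::]].

(* A duplicate-free list containing every sequence of length <= n with
   entries in {1,...,n}; every partition of n is among them. *)
Definition candidates (n : nat) : seq (seq nat) :=
  flatten [seq seqs_len n k | k <- iota 0 n.+1].

Definition partitions (n : nat) : seq (seq nat) :=
  [seq s <- candidates n | is_partition n s].

Definition p (n : nat) : nat := size (partitions n).

(* Sum of the parts of even index a_2 + a_4 + ... (1-based indexing). *)
Fixpoint even_index_sum (s : seq nat) : nat :=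
  match s with
  | _ :: b :: t => b + even_index_sum t
  | _ => 0
  end.

Definition f (n j : nat) : nat :=
  count (fun s => even_index_sum s == j) (partitions n).

From mathcomp Require Import all_boot zify.
Set Implicit Arguments. Unset Strict Implicit. Unset Printing Implicit Defensive.

(* Write l_1 >= l_2 >= ... for a partition of n whose even-index parts sum
   to j, and put r = n - 2j.  Reading the differences of consecutive parts
   backwards, l is uniquely of the form
     (c_1 + r, c_1 + d_1, c_2 + d_1, c_2 + d_2, c_3 + d_2, ...)
   for a pair of partitions (c, d) with |c| + |d| = j and d_1 <= r.  So
   f(n, j) counts the pairs of partitions of total size j whose second
   component has largest part at most n - 2j.  When 3j <= n this constraint
   is vacuous (d_1 <= |d| <= j <= n - 2j); when 3j > n the pair
   (empty, (j)) violates it. *)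

Definition is_part (s : seq nat) : bool := sorted geq s && all (fun a => 0 < a) s.

Lemma is_partitionE n s : is_partition n s = is_part s && (sumn s == n).
Proof. by rewrite /is_partition /is_part andbA. Qed.

Lemma is_part_cons a s : is_part (a :: s) = [&& 0 < a, head 0 s <= a & is_part s].
Proof.
rewrite /is_part /=; case: s => [|b s] /=; first by rewrite !andbT.
by case: (0 < a); case: (b <= a); rewrite //= ?andbF.
Qed.

Lemma is_part_head0 s : is_part s -> head 0 s = 0 -> s = [::].
Proof. by case: s => //= a s; rewrite is_part_cons => /and3P[? _ _] E; lia. Qed.

Lemma is_part_behead s : is_part s -> is_part (behead s) /\ head 0 (behead s) <= head 0 s.
Proof. by case: s => // a s; rewrite is_part_cons => /and3P[]. Qed.

Lemma head_le_sumn s : head 0 s <= sumn s.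
Proof. by case: s => //= a s; rewrite leq_addr. Qed.

Definition pcons (x : nat) (s : seq nat) : seq nat := if x is 0 then s else x :: s.

Lemma is_part_pcons x s : is_part s -> head 0 s <= x -> is_part (pcons x s).
Proof. by case: x => [|x] //= Ps hs; rewrite is_part_cons Ps hs. Qed.

(* [zigzag r c d] is (c_1 + r, c_1 + d_1, c_2 + d_1, c_2 + d_2, ...), with
   c and d padded by zeros and trailing zeros dropped. *)
Fixpoint zigzag0 (r : nat) (d : seq nat) : seq nat :=
  if d is y :: d' then r :: y :: zigzag0 y d' else pcons r [::].

Fixpoint zigzag (r : nat) (c d : seq nat) : seq nat :=
  if c is x :: c' then (x + r) :: (x + head 0 d) :: zigzag (head 0 d) c' (behead d)
  else zigzag0 r d.

Fixpoint unzigzag (l : seq nat) : nat * seq nat * seq nat :=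
  match l with
  | [::] => (0, [::], [::])
  | [:: a] => (a, [::], [::])
  | a :: b :: t =>
      let '(r, c, d) := unzigzag t in (a - b + r, pcons (b - r) c, pcons r d)
  end.

Lemma head_zigzag0 r d : head 0 (zigzag0 r d) = r.
Proof. by case: d => //; case: r. Qed.

Lemma head_zigzag r c d : head 0 (zigzag r c d) = head 0 c + r.
Proof. by case: c => [|x c] //=; rewrite head_zigzag0. Qed.

Lemma sumn_zigzag r c d : sumn (zigzag r c d) = 2 * (sumn c + sumn d) + r.
Proof.
elim: c r d => [|x c IH] r d /=.
  elim: d r => [|y d IHd] r /=; first by case: r => //= r; lia.
  by rewrite IHd; lia.
by rewrite IH; case: d => [|y d] /=; lia.
Qed.

Lemma even_index_sum_zigzag r c d : even_index_sum (zigzag r c d) = sumn c + sumn d.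
Proof.
elim: c r d => [|x c IH] r d /=.
  elim: d r => [|y d IHd] r /=; first by case: r.
  by rewrite IHd.
by rewrite IH; case: d => [|y d] /=; lia.
Qed.

Lemma is_part_zigzag r c d :
  is_part c -> is_part d -> head 0 d <= r -> is_part (zigzag r c d).
Proof.
elim: c r d => [|x c IH] r d /=.
  move=> _; elim: d r => [|y d IHd] r /=; first by move=> _ _; exact: is_part_pcons.
  rewrite is_part_cons => /and3P[y0 hy Pd] yr.
  by rewrite is_part_cons /= is_part_cons IHd // head_zigzag0; apply/and4P; split; lia.
rewrite is_part_cons => /and3P[x0 hx Pc] Pd hd.
have [Pd' hd'] := is_part_behead Pd.
rewrite is_part_cons /= is_part_cons IH // head_zigzag andbT.
by apply/and4P; split; lia.
Qed.

Lemma zigzagK r c d : is_part c -> is_part d -> head 0 d <= r ->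
  unzigzag (zigzag r c d) = (r, c, d).
Proof.
elim: c r d => [|x c IH] r d /=.
  move=> _; elim: d r => [|y d IHd] r /=; first by case: r.
  rewrite is_part_cons => /and3P[y0 hy Pd] yr.
  by rewrite IHd // subnn subnK //; case: y y0 {hy IHd yr}.
rewrite is_part_cons => /and3P[x0 hx Pc] Pd hd.
have [Pd' hd'] := is_part_behead Pd.
rewrite IH // subnDl subnK // addnK.
have -> : pcons x c = x :: c by case: x x0 {hx IH}.
suff -> : pcons (head 0 d) (behead d) = d by [].
by case: d Pd {hd Pd' hd'} => // y d; rewrite is_part_cons => /and3P[]; case: y.
Qed.

Lemma zigzag_pcons r x y c d : (x = 0 -> c = [::]) -> (y = 0 -> d = [::]) -> 0 < x + y ->
  zigzag r (pcons x c) (pcons y d) = (x + r) :: (x + y) :: zigzag y c d.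
Proof.
case: x => [|x] Hc; case: y => [|y] Hd //= _; first by rewrite Hc.
by rewrite Hd.
Qed.

Lemma unzigzagK l r c d : is_part l -> unzigzag l = (r, c, d) ->
  [/\ is_part c, is_part d, head 0 d <= r & zigzag r c d = l].
Proof.
have [k] := ubnP (size l); elim: k l r c d => // k IH [|a [|b t]] r c d /= ltlk.
- by move=> _ [<- <- <-].
- by rewrite is_part_cons => /and3P[a0 _ _] [<- <- <-]; case: a a0.
rewrite is_part_cons /= => /and3P[a0 ba]; rewrite is_part_cons => /and3P[b0 hb Pt].
case Et: (unzigzag t) => [[r' c'] d'] [<- <- <-].
have [Pc Pd hd Zt] := IH t r' c' d' (ltnW ltlk) Pt Et.
have ht : head 0 t = head 0 c' + r' by rewrite -Zt head_zigzag.
have Ec : b - r' = 0 -> c' = [::] by move=> E; apply: is_part_head0 => //; lia.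
have Ed : r' = 0 -> d' = [::] by move=> E; apply: is_part_head0 => //; lia.
split.
- by apply: is_part_pcons => //; lia.
- exact: is_part_pcons.
- by case: r' Ed {Et Zt Ec ht hd} => [|r'] Ed /=; [rewrite Ed | lia].
- rewrite zigzag_pcons //; last by lia.
  by rewrite Zt; congr (_ :: _ :: _); lia.
Qed.

Lemma uniq_flatten_keyed (S T : eqType) (F : S -> seq T) (key : T -> S) s :
  uniq s -> (forall i, uniq (F i)) -> (forall i x, x \in F i -> key x = i) ->
  uniq (flatten [seq F i | i <- s]).
Proof.
move=> Us UF KF; elim: s Us => [|a s IH] //= /andP[aS Us].
rewrite cat_uniq UF IH // andbT; apply/hasP => -[x /flatten_mapP[b bs xb] xa].
by move: aS; rewrite -(KF _ _ xa) (KF _ _ xb) bs.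
Qed.

Lemma size_in_bij (T U : eqType) (s1 : seq T) (s2 : seq U) (G : T -> U) (H : U -> T) :
  uniq s1 -> uniq s2 -> {in s1, cancel G H} -> {in s1, forall x, G x \in s2} ->
  {in s2, forall y, H y \in s1 /\ G (H y) = y} -> size s1 = size s2.
Proof.
move=> U1 U2 GK G12 H21; rewrite -(size_map G); apply/perm_size/uniq_perm => //.
  by rewrite map_inj_in_uniq //; exact: can_in_inj GK.
move=> y; apply/mapP/idP => [[x x1 ->] | y2]; first exact: G12.
by have [Hy1 GHy] := H21 y y2; exists (H y).
Qed.

Lemma size_mem_seqs_len m k s : s \in seqs_len m k -> size s = k.
Proof.
elim: k s => [|k IH] s /=; first by rewrite inE => /eqP->.
by case/allpairsP => -[a t] [_ /IH ht ->] /=; rewrite ht.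
Qed.

Lemma uniq_seqs_len m k : uniq (seqs_len m k).
Proof.
elim: k => [|k IH] //=; apply: allpairs_uniq => //; first exact: iota_uniq.
by move=> [a t] [b u] _ _ /= [-> ->].
Qed.

Lemma mem_seqs_len m s : all (fun a => 0 < a <= m) s -> s \in seqs_len m (size s).
Proof.
elim: s => [|a s IH] //= /andP[ha hs]; apply: allpairs_f; last exact: IH.
by rewrite mem_iota; lia.
Qed.

Lemma uniq_candidates n : uniq (candidates n).
Proof.
apply: (@uniq_flatten_keyed _ _ _ size); first exact: iota_uniq.
  exact: uniq_seqs_len.
exact: size_mem_seqs_len.
Qed.

Lemma uniq_partitions n : uniq (partitions n).
Proof. exact/filter_uniq/uniq_candidates. Qed.

Lemma size_le_sumn s : all (fun a => 0 < a) s -> size s <= sumn s.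
Proof. by elim: s => [|b s IH] //= /andP[hb /IH]; lia. Qed.

Lemma mem_le_sumn s a : a \in s -> a <= sumn s.
Proof. by elim: s => [|b s IH] //=; rewrite inE => /orP[/eqP->|/IH]; lia. Qed.

Lemma mem_partitions n s : (s \in partitions n) = is_partition n s.
Proof.
rewrite mem_filter; apply/andP/idP => [[]//|Ps]; split => //.
move: Ps => /and3P[_ Pos /eqP Hs]; apply/flatten_mapP; exists (size s).
  by rewrite mem_iota add0n ltnS -Hs size_le_sumn.
apply: mem_seqs_len; apply/allP => a ha; move/allP: Pos => /(_ a ha) ->.
by rewrite -Hs mem_le_sumn.
Qed.

Definition partition_pairs (j : nat) : seq (seq nat * seq nat) :=
  flatten [seq [seq (x, y) | x <- partitions i, y <- partitions (j - i)]
          | i <- iota 0 j.+1].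

Lemma mem_partition_pairs j cd : (cd \in partition_pairs j) =
  [&& is_part cd.1, is_part cd.2 & sumn cd.1 + sumn cd.2 == j].
Proof.
apply/flatten_mapP/idP => [[i] | ].
  rewrite mem_iota => hi /allpairsP[[x y] [/= hx hy ->]] /=.
  move: hx hy; rewrite !mem_partitions !is_partitionE.
  by move=> /andP[-> /eqP->] /andP[-> /eqP->]; apply/eqP; lia.
case: cd => x y /and3P[px py /eqP hs]; rewrite /= in px py hs.
exists (sumn x); first by rewrite mem_iota; lia.
by apply: allpairs_f; rewrite mem_partitions is_partitionE ?px ?py; apply/eqP; lia.
Qed.

Lemma uniq_partition_pairs j : uniq (partition_pairs j).
Proof.
apply: (@uniq_flatten_keyed _ _ _ (fun cd => sumn cd.1)); first exact: iota_uniq.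
  move=> i; apply: allpairs_uniq; try exact: uniq_partitions.
  by move=> [a b] [c d] _ _ /= [-> ->].
move=> i cd /allpairsP[[x y] [/= hx _ ->]] /=.
by move: hx; rewrite mem_partitions is_partitionE => /andP[_ /eqP].
Qed.

Lemma size_partition_pairs j :
  size (partition_pairs j) = \sum_(0 <= i < j.+1) p i * p (j - i).
Proof.
rewrite size_flatten /shape -map_comp /index_iota subn0.
by elim: (iota 0 j.+1) => [|a s IH]; rewrite ?big_nil // big_cons /= IH size_allpairs.
Qed.

Lemma f_count_partition_pairs n j : 2 * j <= n ->
  f n j = count (fun cd => head 0 cd.2 <= n - 2 * j) (partition_pairs j).
Proof.
move=> hj; rewrite /f -!size_filter; symmetry.
apply: (@size_in_bij _ _ _ _ (fun cd => zigzag (n - 2 * j) cd.1 cd.2)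
          (fun l => ((unzigzag l).1.2, (unzigzag l).2))).
- exact/filter_uniq/uniq_partition_pairs.
- exact/filter_uniq/uniq_partitions.
- move=> [c d]; rewrite mem_filter mem_partition_pairs /=.
  by move=> /andP[hd /and3P[Pc Pd _]]; rewrite zigzagK.
- move=> [c d]; rewrite mem_filter mem_partition_pairs /=.
  move=> /andP[hd /and3P[Pc Pd /eqP hs]].
  rewrite mem_filter mem_partitions is_partitionE is_part_zigzag //.
  by rewrite sumn_zigzag even_index_sum_zigzag hs; apply/and3P; split => //; apply/eqP; lia.
- move=> l; rewrite mem_filter mem_partitions is_partitionE => /andP[/eqP El /andP[Pl /eqP Sl]].
  case Eu: (unzigzag l) => [[r c] d] /=.
  have [Pc Pd hd Zl] := unzigzagK Pl Eu.
  rewrite -Zl sumn_zigzag even_index_sum_zigzag in El Sl.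
  have -> : n - 2 * j = r by lia.
  by rewrite mem_filter mem_partition_pairs /= hd Pc Pd El eqxx Zl.
Qed.

Theorem theorem1 :
  forall n : nat,
    (forall j : nat, 3 * j <= n ->
       f n j = \sum_(0 <= i < j.+1) p i * p (j - i)) /\
    (forall j : nat, n < 3 * j -> 2 * j <= n ->
       f n j < \sum_(0 <= i < j.+1) p i * p (j - i)).
Proof.
move=> n; split => [j hj | j hj h2j].
  rewrite f_count_partition_pairs; last by lia.
  rewrite -size_partition_pairs; apply/eqP; rewrite -all_count; apply/allP => -[c d].
  rewrite mem_partition_pairs /= => /and3P[_ _ /eqP hs].
  by have := head_le_sumn d; lia.
rewrite f_count_partition_pairs // -size_partition_pairs.
rewrite -(count_predC (fun cd => head 0 cd.2 <= n - 2 * j)) -[X in X < _]addn0.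
rewrite ltn_add2l -has_count; apply/hasP; exists ([::], [:: j]) => /=; last by lia.
by rewrite mem_partition_pairs /= /is_part /= !andbT addn0; lia.
Qed.
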